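(* Let $n,d\ge1$. Let $W=(w_{i,j})$, $\widetilde W=(\tilde w_{i,j})$ be real $n\times n$ matrices and $G,\widetilde G$ real $nd\times nd$ block matrices with $d\times d$ blocks $G_{i,j},\widetilde G_{i,j}$. Suppose there exist $f_1,\dots,f_n>0$ and $\varepsilon,\eta\ge0$ with $$\sup_{i\ne j}\Big|\frac{\tilde w_{i,j}}{f_i}-w_{i,j}\Big|\le\varepsilon,\qquad \sup_{i,j}\|\widetilde G_{i,j}-G_{i,j}\|_F\le\eta,$$ and that there is $C>0$ with $0\le w_{i,j}\le C$ for all $i,j$, $\sup_{i,j}\|G_{i,j}\|_F\le C$ and $\sup_{i,j}\|\widetilde G_{i,j}\|_F\le C$. If $\inf_i\frac1n\sum_{j\ne i}w_{i,j}>\gamma$ and $\gamma>\varepsilon$, then $$\|L_0(W,G)-L_0(\widetilde W,\widetilde G)\|_{op}\le \frac1\gamma C(\eta+\varepsilon)+\frac{\varepsilon}{\gamma(\gamma-\varepsilon)}C^2$$ and $$\|L(W,G)-L_0(\widetilde W,\widetilde G)\|_{op}\le \frac1\gamma C(\eta+\varepsilon)+\frac{\varepsilon}{\gamma(\gamma-\varepsilon)}C^2+\frac{C^2}{n\gamma}.$$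
   Context: For an $n\times n$ matrix $W=(w_{i,j})$ and an $nd\times nd$ block matrix $G$ with $d\times d$ blocks $G_{i,j}$, define $S$ as the block matrix with blocks $S_{i,j}=w_{i,j}G_{i,j}$ and $D$ as the block-diagonal matrix with diagonal blocks $D_{i,i}=\big(\sum_{j\ne i}w_{i,j}\big)\mathrm I_d$ (assumed invertible); $L(W,G):=D^{-1}S$. Further $L_0(W,G):=L(W\circ 1_{i\ne j},G)$, i.e. $L$ computed from the weight matrix obtained from $W$ by setting its diagonal entries to $0$. $\|\cdot\|_{op}$ is the largest singular value, $\|\cdot\|_F$ the Frobenius norm. *)

From mathcomp Require Import all_boot all_order all_algebra.
From mathcomp Require Import all_classical all_reals.
Set Implicit Arguments. Unset Strict Implicit. Unset Printing Implicit Defensive.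
Import Order.TTheory GRing.Theory Num.Theory.
Local Open Scope ring_scope.

Section Defs.
Variable R : realType.
Variables n d : nat.

(* Block decomposition of an index p : 'I_(n*d) into (block index, index
   inside the block); inverse of mxvec_index (row-major: p = i*d + a). *)
Definition unvec (p : 'I_(n * d)) : 'I_n * 'I_d :=
  enum_val (cast_ord (esym (@mxvec_cast n d)) p).

Definition blk (G : 'M[R]_(n * d)) (i j : 'I_n) : 'M[R]_d :=
  \matrix_(a < d, b < d) G (mxvec_index i a) (mxvec_index j b).

Definition frob m k (A : 'M[R]_(m, k)) : R :=
  Num.sqrt (\sum_i \sum_j A i j ^+ 2).

Definition opnorm m (A : 'M[R]_m) : R :=
  Num.sqrt (sup [set a : R | eigenvalue (A^T *m A) a]).

(* S_{i,j} = w_{i,j} G_{i,j} *)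
Definition Smat (W : 'M[R]_n) (G : 'M[R]_(n * d)) : 'M[R]_(n * d) :=
  \matrix_(p, q) (W (unvec p).1 (unvec q).1 * G p q).

(* D block diagonal with D_{i,i} = (sum_{j <> i} w_{i,j}) I_d *)
Definition Dmat (W : 'M[R]_n) : 'M[R]_(n * d) :=
  \matrix_(p, q) ((p == q)%:R * \sum_(j < n | j != (unvec p).1) W (unvec p).1 j).

Definition Lmat (W : 'M[R]_n) (G : 'M[R]_(n * d)) : 'M[R]_(n * d) :=
  invmx (Dmat W) *m Smat W G.

Definition offdiag (W : 'M[R]_n) : 'M[R]_n :=
  \matrix_(i, j) (if i == j then 0 else W i j).

Definition L0mat (W : 'M[R]_n) (G : 'M[R]_(n * d)) : 'M[R]_(n * d) :=
  Lmat (offdiag W) G.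

End Defs.

From mathcomp Require Import all_boot all_order all_algebra.
From mathcomp Require Import all_classical all_reals.
From mathcomp Require Import ring lra.
Set Implicit Arguments. Unset Strict Implicit. Unset Printing Implicit Defensive.
Import Order.TTheory GRing.Theory Num.Theory.
Local Open Scope ring_scope.

(* Write [Smat Q H] for the matrix whose block (i,j) is [Q i j] times that of
   [H], and [P], [Pt] for the row-normalised off-diagonal weights of [W], [Wt]
   (the factors [f i] cancel in the normalisation).  Then
     L0(W,G) - L0(Wt,Gt) = Smat P (G - Gt) + Smat (P - Pt) Gt.
   Every entry of [P] is at most [C / (n gamma)], so the first term has
   Frobenius norm at most [C eta / gamma].  Each row of [P - Pt] has Euclidean
   norm at most [(eps/gamma + eps C/(gamma (gamma - eps))) / sqrt n], which
   follows from a Lagrange-type bound on [w_j / sum w - u_j / sum u] when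
   [|u_j - w_j| <= eps]; this bounds the Frobenius norm of the second term.
   The operator norm is at most the Frobenius norm.  Finally
   L(W,G) - L0(W,G) is block diagonal with blocks [(w_ii / D_i) G_ii], whose
   operator norm is at most [C^2 / (n gamma)]. *)

Section FiniteSums.
Variables (R : realType) (T : finType).
Implicit Types (P : pred T) (x y : T -> R).

Lemma sum_sqr_ge0 P x : 0 <= \sum_(j | P j) x j ^+ 2.
Proof. by apply: sumr_ge0 => j _; rewrite sqr_ge0. Qed.

Lemma sumr_const_pred P (c : R) : \sum_(j | P j) c = #|P|%:R * c.
Proof. by rewrite sumr_const mulr_natl. Qed.

Lemma sumr_const_ord k (c : R) : \sum_(i < k) c = k%:R * c.
Proof. by rewrite sumr_const card_ord mulr_natl. Qed.

Lemma big_lin3 P (F1 F2 F3 : T -> R) k1 k2 k3 :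
  \sum_(j | P j) (k1 * F1 j + k2 * F2 j + k3 * F3 j) =
  k1 * \sum_(j | P j) F1 j + k2 * \sum_(j | P j) F2 j + k3 * \sum_(j | P j) F3 j.
Proof. by rewrite !big_split /= !mulr_sumr. Qed.

Lemma cauchy_schwarz P x y :
  (\sum_(j | P j) x j * y j) ^+ 2 <=
  (\sum_(j | P j) x j ^+ 2) * (\sum_(j | P j) y j ^+ 2).
Proof.
set S := \sum_(j | P j) x j * y j.
set A := \sum_(j | P j) x j ^+ 2; set Q := \sum_(j | P j) y j ^+ 2.
have [Q0|Qn0] := eqVneq Q 0.
  have y0 j : P j -> y j = 0.
    move=> Pj; apply/eqP; rewrite -sqrf_eq0; apply/eqP.
    by apply: (psumr_eq0P _ Q0) => // k _; rewrite sqr_ge0.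
  have -> : S = 0 by rewrite /S big1 // => j Pj; rewrite y0 // mulr0.
  by rewrite Q0 expr0n /= mulr0.
have Qp : 0 < Q by rewrite lt0r Qn0 sum_sqr_ge0.
have expand : \sum_(j | P j) (x j * Q - y j * S) ^+ 2 = Q * (Q * A - S ^+ 2).
  transitivity (\sum_(j | P j) (Q ^+ 2 * x j ^+ 2 + (- 2 * Q * S) * (x j * y j)
                   + S ^+ 2 * y j ^+ 2)).
    by apply: eq_bigr => j _; ring.
  by rewrite big_lin3 -/A -/S -/Q; ring.
have : 0 <= Q * A - S ^+ 2.
  by rewrite -(pmulr_rge0 _ Qp) -expand sum_sqr_ge0.
lra.
Qed.

Lemma sum_sqrD_le P x y a b : 0 <= a -> 0 <= b ->
  \sum_(j | P j) x j ^+ 2 <= a ^+ 2 -> \sum_(j | P j) y j ^+ 2 <= b ^+ 2 ->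
  \sum_(j | P j) (x j + y j) ^+ 2 <= (a + b) ^+ 2.
Proof.
move=> a0 b0 hx hy.
have hc := cauchy_schwarz P x y.
set S := \sum_(j | P j) x j * y j in hc *.
have expand : \sum_(j | P j) (x j + y j) ^+ 2 =
   \sum_(j | P j) x j ^+ 2 + 2 * S + \sum_(j | P j) y j ^+ 2.
  transitivity (\sum_(j | P j) (1 * x j ^+ 2 + 2 * (x j * y j) + 1 * y j ^+ 2)).
    by apply: eq_bigr => j _; ring.
  by rewrite big_lin3 !mul1r.
have hS : S <= a * b.
  have hsq : S ^+ 2 <= (a * b) ^+ 2.
    by rewrite exprMn; apply: le_trans hc _; apply: ler_pM; rewrite ?sum_sqr_ge0.
  by apply: ler_normlW; rewrite -ler_sqr ?nnegrE ?mulr_ge0 // real_normK ?num_real.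
rewrite expand; lra.
Qed.

Lemma sum_centred_mul P (a b : T -> R) : (0 < #|P|)%N ->
  \sum_(j | P j) (a j - (\sum_(k | P k) a k) / #|P|%:R)
                 * (b j - (\sum_(k | P k) b k) / #|P|%:R)
  = \sum_(j | P j) a j * b j - (\sum_(k | P k) a k) * (\sum_(k | P k) b k) / #|P|%:R.
Proof.
move=> P0; set A := \sum_(k | P k) a k; set B := \sum_(k | P k) b k.
have m0 : #|P|%:R != 0 :> R by rewrite pnatr_eq0 -lt0n.
transitivity (\sum_(j | P j) (1 * (a j * b j) + (- B / #|P|%:R) * a j + (- A / #|P|%:R) * b j
    + (A / #|P|%:R * (B / #|P|%:R)) * 1)).
  by apply: eq_bigr => j _; ring.
by rewrite big_split /= big_lin3 sumr_const_pred -/A -/B; field.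
Qed.

(* Cauchy--Schwarz for the centred families [a - A/m], [b - B/m]; expanding
   [a j * B - b j * A = \sum_k (a j * b k - b j * a k)] instead loses a factor 2. *)
Lemma sum_sqr_cross_le P (a b : T -> R) :
  \sum_(j | P j) (a j * \sum_(k | P k) b k - b j * \sum_(k | P k) a k) ^+ 2
  <= #|P|%:R * (\sum_(j | P j) a j ^+ 2) * (\sum_(j | P j) b j ^+ 2).
Proof.
set A := \sum_(k | P k) a k; set B := \sum_(k | P k) b k.
set Pa := \sum_(j | P j) a j ^+ 2; set Qb := \sum_(j | P j) b j ^+ 2.
set S := \sum_(j | P j) a j * b j.
pose m : R := #|P|%:R.
have -> : \sum_(j | P j) (a j * B - b j * A) ^+ 2 = B ^+ 2 * Pa - 2 * A * B * S + A ^+ 2 * Qb.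
  transitivity (\sum_(j | P j) (B ^+ 2 * a j ^+ 2 + (- 2 * A * B) * (a j * b j)
                   + A ^+ 2 * b j ^+ 2)).
    by apply: eq_bigr => j _; ring.
  by rewrite big_lin3 -/Pa -/S -/Qb; ring.
have [P0|Pn0] := eqVneq #|P| 0%N.
  have e0 (F : T -> R) : \sum_(j | P j) F j = 0.
    by rewrite big_pred0 // => j; apply/negbTE; rewrite -[P j]/(j \in P) (card0_eq P0).
  by rewrite /Pa /Qb /S /m !e0 P0; lra.
have P0 : (0 < #|P|)%N by rewrite lt0n.
have mp : 0 < m by rewrite /m ltr0n.
have centred_sqr (F : T -> R) : \sum_(j | P j) (F j - (\sum_(k | P k) F k) / m) ^+ 2
    = \sum_(j | P j) F j ^+ 2 - (\sum_(k | P k) F k) ^+ 2 / m.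
  rewrite expr2 -sum_centred_mul //; apply: eq_bigr => j _; exact: expr2.
have hc := cauchy_schwarz P (fun j => a j - A / m) (fun j => b j - B / m).
rewrite sum_centred_mul // !centred_sqr -/A -/B -/Pa -/Qb -/S in hc.
have key : m * (S - A * B / m) ^+ 2 <= m * ((Pa - A ^+ 2 / m) * (Qb - B ^+ 2 / m)).
  by rewrite ler_pM2l.
have k1 : m * (S - A * B / m) ^+ 2 = m * S ^+ 2 - 2 * A * B * S + A ^+ 2 * B ^+ 2 / m.
  by field; lra.
have k2 : m * ((Pa - A ^+ 2 / m) * (Qb - B ^+ 2 / m)) =
   m * Pa * Qb - A ^+ 2 * Qb - B ^+ 2 * Pa + A ^+ 2 * B ^+ 2 / m.
  by field; lra.
have : 0 <= m * S ^+ 2 by rewrite mulr_ge0 ?sqr_ge0 // ltW.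
rewrite k1 k2 in key; lra.
Qed.

End FiniteSums.

Lemma normalized_dist_arith (R : realType) (n m C eps gamma D U : R) :
  0 <= eps -> eps < gamma -> gamma <= C -> 0 < n -> 0 <= m <= n ->
  n * gamma < D -> n * (gamma - eps) <= U ->
  m ^+ 2 * C * eps ^+ 2 * D / (D * U) ^+ 2
    <= (eps / gamma + eps * C / (gamma * (gamma - eps))) ^+ 2 / n.
Proof.
move=> e0 ge gC n0 /andP[m0 mn] hD hU.
set h := gamma - eps.
have g0 : 0 < gamma by apply: le_lt_trans ge.
have h0 : 0 < h by rewrite subr_gt0.
have D0 : 0 < D by apply: lt_trans hD; rewrite mulr_gt0.
have U0 : 0 < U by apply: lt_le_trans hU; rewrite mulr_gt0.
have C0 : 0 < C by apply: lt_le_trans gC.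
have -> : m ^+ 2 * C * eps ^+ 2 * D / (D * U) ^+ 2 = m ^+ 2 * (C * eps ^+ 2) / (D * U ^+ 2).
  by field; rewrite !gt_eqF.
have -> : (eps / gamma + eps * C / (gamma * h)) ^+ 2 / n
    = n ^+ 2 * ((h + C) ^+ 2 / gamma * eps ^+ 2) / (n * gamma * (n * h) ^+ 2).
  by rewrite /h; field; rewrite !gt_eqF.
have Cg : C * gamma <= (h + C) ^+ 2.
  have : 0 <= h * (h + C) + C * (C - eps) by rewrite addr_ge0 ?mulr_ge0 //; lra.
  rewrite /h; nra.
apply: ler_pM.
- by rewrite mulr_ge0 ?sqr_ge0 ?mulr_ge0 ?(ltW C0).
- by rewrite invr_ge0 mulr_ge0 ?sqr_ge0 ?ltW.
- apply: ler_pM.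
  + exact: sqr_ge0.
  + by rewrite mulr_ge0 ?sqr_ge0 ?ltW.
  + by rewrite ler_sqr ?nnegrE // (le_trans m0).
  + by rewrite ler_wpM2r ?sqr_ge0 // ler_pdivlMr // mulrC.
- rewrite lef_pV2 ?posrE ?mulr_gt0 ?exprn_gt0 //.
  apply: ler_pM; [by rewrite mulr_ge0 ?ltW | exact: sqr_ge0 | exact: ltW |].
  by rewrite ler_sqr ?nnegrE ?mulr_ge0 ?(ltW n0) ?(ltW h0) ?(ltW U0).
Qed.

Section RowPerturbation.
Variables (R : realType) (T : finType).
Implicit Types (P : pred T) (w u : T -> R).

Lemma sum_perturbed_ge P w u eps : (forall j, P j -> `|u j - w j| <= eps) ->
  \sum_(j | P j) w j - #|P|%:R * eps <= \sum_(j | P j) u j.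
Proof.
move=> he; rewrite -sumr_const_pred -sumrB ler_sum // => j Pj.
by move: (he j Pj); rewrite ler_norml => /andP[+ _]; lra.
Qed.

Lemma sum_sqr_cross_perturbed_le P w (e : T -> R) C eps : 0 <= eps ->
  (forall j, P j -> 0 <= w j <= C) -> (forall j, P j -> `|e j| <= eps) ->
  \sum_(j | P j) (w j * \sum_(k | P k) e k - e j * \sum_(k | P k) w k) ^+ 2
    <= #|P|%:R ^+ 2 * C * eps ^+ 2 * \sum_(k | P k) w k.
Proof.
move=> e0 hw he; apply: le_trans (sum_sqr_cross_le P w e) _.
have hw2 : \sum_(j | P j) w j ^+ 2 <= C * \sum_(k | P k) w k.
  rewrite mulr_sumr ler_sum // => j Pj; have /andP [w0 wC] := hw j Pj.
  by rewrite expr2 ler_wpM2r.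
have he2 : \sum_(j | P j) e j ^+ 2 <= #|P|%:R * eps ^+ 2.
  rewrite -sumr_const_pred ler_sum // => j Pj.
  by rewrite -real_normK ?num_real // ler_sqr ?nnegrE // he.
rewrite [X in _ <= X](_ : _ = #|P|%:R * (C * \sum_(k | P k) w k) * (#|P|%:R * eps ^+ 2));
  last by ring.
by apply: ler_pM; rewrite ?mulr_ge0 ?sum_sqr_ge0 ?ler0n ?ler_wpM2l.
Qed.

(* With [u := wt / fi], [e := u - w], [D := \sum w], [U := \sum u] and
   [E := U - D], the [j]-th term is [((w j * E - e j * D) / (D * U)) ^+ 2]. *)
Lemma normalized_dist_le P w (wt : T -> R) (fi eps C gamma n : R) :
  0 < fi -> 0 <= eps -> eps < gamma ->
  (forall j, P j -> `|wt j / fi - w j| <= eps) ->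
  (forall j, P j -> 0 <= w j <= C) ->
  0 < n -> #|P|%:R <= n -> n * gamma < \sum_(j | P j) w j ->
  \sum_(j | P j) (w j / \sum_(k | P k) w k - wt j / \sum_(k | P k) wt k) ^+ 2
    <= (eps / gamma + eps * C / (gamma * (gamma - eps))) ^+ 2 / n.
Proof.
move=> fi0 e0 ge he hw n0 mn hD.
set D := \sum_(k | P k) w k in hD *.
pose u j := wt j / fi; pose e j := u j - w j.
set U := \sum_(k | P k) u k; set E := \sum_(k | P k) e k.
pose m : R := #|P|%:R.
have m0 : 0 <= m by rewrite /m ler0n.
have g0 : 0 < gamma by apply: le_lt_trans ge.
have D0 : 0 < D by apply: lt_trans hD; rewrite mulr_gt0.
have UDE : U = D + E.
  by rewrite /E /U /D -big_split /=; apply: eq_bigr => j _; rewrite /e addrC subrK.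
have hU : n * (gamma - eps) <= U.
  have := sum_perturbed_ge he; rewrite -/D -/U -/m.
  have : m * eps <= n * eps by rewrite ler_wpM2r.
  rewrite mulrBr; lra.
have U0 : 0 < U by apply: lt_le_trans hU; rewrite mulr_gt0 // subr_gt0.
have DC : D <= m * C.
  by rewrite /D -sumr_const_pred ler_sum // => j /hw /andP[].
have gC : gamma <= C.
  rewrite leNgt; apply/negP => Cg.
  have : m * C <= m * gamma by rewrite ler_wpM2l // ltW.
  have : m * gamma <= n * gamma by rewrite ler_wpM2r // ltW.
  lra.
have -> : \sum_(k | P k) wt k = fi * U.
  by rewrite /U mulr_sumr; apply: eq_bigr => j _; rewrite /u mulrCA mulfV ?gt_eqF ?mulr1.
have termE j : w j / D - wt j / (fi * U) = (w j * E - e j * D) / (D * U).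
  rewrite /e /u UDE; move: U0; rewrite UDE => U0.
  by field; rewrite !gt_eqF.
under eq_bigr do rewrite termE expr_div_n.
rewrite -mulr_suml.
have hZ := sum_sqr_cross_perturbed_le e0 hw he; rewrite -/D -/E -/m in hZ.
apply: le_trans (normalized_dist_arith (m := m) e0 ge gC n0 _ hD hU); last by rewrite m0.
by rewrite ler_wpM2r // invr_ge0 sqr_ge0.
Qed.

End RowPerturbation.

Section Norms.
Variable R : realType.

Definition frob2 m k (A : 'M[R]_(m, k)) : R := \sum_i \sum_j A i j ^+ 2.

Lemma frob2_ge0 m k (A : 'M[R]_(m, k)) : 0 <= frob2 A.
Proof. by apply: sumr_ge0 => i _; apply: sum_sqr_ge0. Qed.

Lemma frob2_le m k (A : 'M[R]_(m, k)) c : frob A <= c -> frob2 A <= c ^+ 2.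
Proof.
move=> h; have c0 : 0 <= c by apply: le_trans h; apply: sqrtr_ge0.
by rewrite -(sqr_sqrtr (frob2_ge0 A)) ler_sqr ?nnegrE ?sqrtr_ge0.
Qed.

Lemma frob_le m k (A : 'M[R]_(m, k)) c : 0 <= c -> frob2 A <= c ^+ 2 -> frob A <= c.
Proof. by move=> c0 h; rewrite /frob -(ger0_norm c0) -sqrtr_sqr ler_sqrt ?sqr_ge0. Qed.

Lemma frob2Z m k (c : R) (A : 'M[R]_(m, k)) : frob2 (c *: A) = c ^+ 2 * frob2 A.
Proof.
rewrite /frob2 mulr_sumr; apply: eq_bigr => i _; rewrite mulr_sumr.
by apply: eq_bigr => j _; rewrite mxE exprMn.
Qed.

Lemma frobN m k (A : 'M[R]_(m, k)) : frob (- A) = frob A.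
Proof. by rewrite /frob -scaleN1r -/(frob2 _) frob2Z sqrrN expr1n mul1r. Qed.

Lemma frobD m k (A B : 'M[R]_(m, k)) : frob (A + B) <= frob A + frob B.
Proof.
have frob_pair (M : 'M[R]_(m, k)) : \sum_p M p.1 p.2 ^+ 2 = frob M ^+ 2.
  by rewrite /frob (sqr_sqrtr (frob2_ge0 M)) /frob2 pair_bigA.
apply: frob_le; first by rewrite addr_ge0 ?sqrtr_ge0.
rewrite /frob2 pair_bigA /=; under eq_bigr do rewrite mxE.
by apply: sum_sqrD_le; rewrite ?sqrtr_ge0 ?frob_pair.
Qed.

Definition opbounded N (M : 'M[R]_N) (K : R) := forall x : 'rV[R]_N,
  \sum_p (\sum_q M p q * x 0 q) ^+ 2 <= K ^+ 2 * \sum_q x 0 q ^+ 2.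

(* An eigenvalue [a] of [M^T M] with eigenvector [v] is the Rayleigh quotient
   [|v M^T|^2 / |v|^2]. *)
Lemma opnorm_le N (M : 'M[R]_N) K : 0 <= K -> opbounded M K -> opnorm M <= K.
Proof.
move=> K0 hM.
suff hs : sup [set a : R | eigenvalue (M^T *m M) a] <= K ^+ 2.
  by rewrite /opnorm -(ger0_norm K0) -sqrtr_sqr ler_sqrt ?sqr_ge0.
have [[a0 ha0]|ne] := pselect (exists a, eigenvalue (M^T *m M) a); last first.
  have -> : [set a : R | eigenvalue (M^T *m M) a]%classic = set0%classic.
    by apply/seteqP; split => a //= ha; apply: ne; exists a.
  by rewrite sup0 sqr_ge0.
apply: ge_sup; first by exists a0.
move=> a /= /eigenvalueP [v hv vn0].
set s := \sum_q v 0 q ^+ 2.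
have s0 : 0 < s.
  rewrite lt0r sum_sqr_ge0 andbT; apply: contra vn0 => /eqP s0; apply/eqP.
  apply/matrixP => i q; rewrite (ord1 i) !mxE; apply/eqP; rewrite -sqrf_eq0; apply/eqP.
  by apply: (psumr_eq0P _ s0) => // k _; rewrite sqr_ge0.
have rayleigh : \sum_p (\sum_q M p q * v 0 q) ^+ 2 = a * s.
  have -> : a * s = (v *m (M^T *m M) *m v^T) 0 0.
    by rewrite hv -scalemxAl mxE mxE; congr (_ * _); apply: eq_bigr => q _; rewrite mxE expr2.
  rewrite mulmxA -mulmxA -[M in _ *m (M *m _)]trmxK -trmx_mul mxE.
  apply: eq_bigr => p _; rewrite !mxE expr2; congr (_ * _);
    by apply: eq_bigr => q _; rewrite !mxE mulrC.
by rewrite -(ler_pM2r s0) -rayleigh hM.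
Qed.

Lemma opbounded_frob N (M : 'M[R]_N) : opbounded M (frob M).
Proof.
move=> x; rewrite sqr_sqrtr ?frob2_ge0 // /frob2 mulr_suml ler_sum // => p _.
exact: cauchy_schwarz.
Qed.

Lemma opboundedD N (M1 M2 : 'M[R]_N) K1 K2 : 0 <= K1 -> 0 <= K2 ->
  opbounded M1 K1 -> opbounded M2 K2 -> opbounded (M1 + M2) (K1 + K2).
Proof.
move=> K10 K20 h1 h2 x; set s := \sum_q x 0 q ^+ 2.
have s0 : 0 <= s by apply: sum_sqr_ge0.
have -> : (K1 + K2) ^+ 2 * s = (K1 * Num.sqrt s + K2 * Num.sqrt s) ^+ 2.
  by rewrite -mulrDl exprMn sqr_sqrtr.
under eq_bigr do under eq_bigr do rewrite mxE mulrDl.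
under eq_bigr do rewrite big_split /=.
by apply: sum_sqrD_le; rewrite ?mulr_ge0 ?sqrtr_ge0 // exprMn sqr_sqrtr.
Qed.

End Norms.

Section Blocks.
Variables (R : realType) (n d : nat).
Implicit Types (P W : 'M[R]_n) (A G : 'M[R]_(n * d)).

Lemma unvecK (i : 'I_n) (a : 'I_d) : unvec (mxvec_index i a) = (i, a).
Proof. by rewrite /unvec /mxvec_index cast_ordK enum_rankK. Qed.

Lemma unvecKV (p : 'I_(n * d)) : mxvec_index (unvec p).1 (unvec p).2 = p.
Proof. by rewrite /unvec /mxvec_index -surjective_pairing enum_valK cast_ordKV. Qed.

Lemma sum_mxvec_index (F : 'I_(n * d) -> R) :
  \sum_p F p = \sum_i \sum_a F (mxvec_index i a).
Proof.
rewrite pair_bigA (reindex (@unvec n d)) /=; first by apply: eq_bigr => p _; rewrite unvecKV.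
by exists (fun ia => mxvec_index ia.1 ia.2) => [p _|[i a] _]; rewrite ?unvecKV ?unvecK.
Qed.

Lemma frob2_blk A : frob2 A = \sum_i \sum_j frob2 (blk A i j).
Proof.
rewrite /frob2 sum_mxvec_index; apply: eq_bigr => i _.
under eq_bigr do rewrite sum_mxvec_index.
rewrite exchange_big; apply: eq_bigr => j _; apply: eq_bigr => a _.
by apply: eq_bigr => b _; rewrite mxE.
Qed.

Lemma blkB A G i j : blk (A - G) i j = blk A i j - blk G i j.
Proof. by apply/matrixP => a b; rewrite !mxE. Qed.

Lemma SmatE P G i j a b :
  Smat P G (mxvec_index i a) (mxvec_index j b) = P i j * G (mxvec_index i a) (mxvec_index j b).
Proof. by rewrite mxE !unvecK. Qed.

Lemma blk_Smat P G i j : blk (Smat P G) i j = P i j *: blk G i j.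
Proof. by apply/matrixP => a b; rewrite !mxE !unvecK. Qed.

Lemma frob2_Smat P G : frob2 (Smat P G) = \sum_i \sum_j P i j ^+ 2 * frob2 (blk G i j).
Proof.
rewrite frob2_blk; apply: eq_bigr => i _; apply: eq_bigr => j _.
by rewrite blk_Smat frob2Z.
Qed.

Lemma SmatBB P1 P2 G1 G2 :
  Smat P1 G1 - Smat P2 G2 = Smat P1 (G1 - G2) + Smat (P1 - P2) G2.
Proof. by apply/matrixP => p q; rewrite !mxE; ring. Qed.

Lemma SmatBl P1 P2 G : Smat P1 G - Smat P2 G = Smat (P1 - P2) G.
Proof. by apply/matrixP => p q; rewrite !mxE mulrBl. Qed.

Lemma frob2_Smat_le P G (r : 'I_n -> R) c : 0 <= c ->
  (forall i j, frob (blk G i j) <= c) -> (forall i, \sum_j P i j ^+ 2 <= r i) ->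
  frob2 (Smat P G) <= c ^+ 2 * \sum_i r i.
Proof.
move=> c0 hG hP; rewrite frob2_Smat mulr_sumr ler_sum // => i _.
apply: le_trans (_ : \sum_j P i j ^+ 2 * c ^+ 2 <= _).
  by apply: ler_sum => j _; rewrite ler_wpM2l ?sqr_ge0 ?frob2_le.
by rewrite -mulr_suml mulrC ler_wpM2l ?sqr_ge0.
Qed.

(* For block-diagonal [P] the bound is the largest block bound, not the
   Frobenius norm (which would cost a factor [sqrt n]). *)
Lemma opbounded_Smat_diag P G K :
  (forall i j, i != j -> P i j = 0) ->
  (forall i, P i i ^+ 2 * frob2 (blk G i i) <= K ^+ 2) ->
  opbounded (Smat P G) K.
Proof.
move=> Pdiag hK x; rewrite !sum_mxvec_index mulr_sumr ler_sum // => i _.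
pose xi (b : 'I_d) := x 0 (mxvec_index i b).
have row a : \sum_q Smat P G (mxvec_index i a) q * x 0 q =
    \sum_b P i i * G (mxvec_index i a) (mxvec_index i b) * xi b.
  rewrite sum_mxvec_index (bigD1 i) //= [X in _ + X]big1 ?addr0 => [|j ji].
    by apply: eq_bigr => b _; rewrite SmatE.
  by apply: big1 => b _; rewrite SmatE Pdiag 1?eq_sym // !mul0r.
under eq_bigr do rewrite row.
apply: le_trans (_ : \sum_a (P i i ^+ 2 * \sum_b blk G i i a b ^+ 2) * \sum_b xi b ^+ 2 <= _).
  apply: ler_sum => a _; apply: le_trans (cauchy_schwarz _ _ _) _.
  rewrite ler_wpM2r ?sum_sqr_ge0 // mulr_sumr le_eqVlt; apply/orP; left; apply/eqP.
  by apply: eq_bigr => b _; rewrite mxE exprMn.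
by rewrite -mulr_suml -mulr_sumr ler_wpM2r ?sum_sqr_ge0.
Qed.

End Blocks.

Section Normalization.
Variables (R : realType) (n d : nat).
Implicit Types (W : 'M[R]_n) (G : 'M[R]_(n * d)).

Definition rowdeg W (i : 'I_n) : R := \sum_(j < n | j != i) W i j.

Definition normalized W : 'M[R]_n := \matrix_(i, j) (W i j / rowdeg W i).

Lemma rowdeg_offdiag W i : rowdeg (offdiag W) i = rowdeg W i.
Proof. by apply: eq_bigr => j ji; rewrite mxE eq_sym (negbTE ji). Qed.

Lemma normalized_offdiag W i j :
  normalized (offdiag W) i j = if i == j then 0 else normalized W i j.
Proof. by rewrite !mxE rowdeg_offdiag; case: eqP => // _; rewrite mul0r. Qed.

Lemma invmx_Dmat W : (forall i, rowdeg W i != 0) ->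
  invmx (Dmat d W) = \matrix_(p, q) ((p == q)%:R * (rowdeg W (unvec p).1)^-1).
Proof.
move=> hD; set X := \matrix_(p, q) _.
have DX : Dmat d W *m X = 1%:M.
  apply/matrixP => p q; rewrite !mxE (bigD1 p) //= big1 => [|k kp].
    by rewrite !mxE eqxx mul1r addr0 -/(rowdeg W _) mulrCA mulfV ?mulr1.
  by rewrite !mxE eq_sym (negbTE kp) !mul0r.
have [uD _] := mulmx1_unit DX.
by rewrite -[X]mul1mx -(mulVmx uD) -mulmxA DX mulmx1.
Qed.

Lemma Lmat_Smat W G : (forall i, rowdeg W i != 0) -> Lmat W G = Smat (normalized W) G.
Proof.
move=> hD; apply/matrixP => p q.
rewrite /Lmat invmx_Dmat // !mxE (bigD1 p) //= big1 => [|k kp].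
  by rewrite !mxE eqxx mul1r addr0 mulrAC mulrC.
by rewrite !mxE eq_sym (negbTE kp) !mul0r.
Qed.

Lemma L0mat_Smat W G : (forall i, rowdeg W i != 0) ->
  L0mat W G = Smat (normalized (offdiag W)) G.
Proof. by move=> hD; apply: Lmat_Smat => i; rewrite rowdeg_offdiag. Qed.

End Normalization.

Section Perturbation.
Variables (R : realType) (n d : nat) (W Wt : 'M[R]_n) (G Gt : 'M[R]_(n * d)).
Variables (f : 'I_n -> R) (eps eta C gamma : R).
Hypothesis n_gt0 : (0 < n)%N.
Hypothesis f_gt0 : forall i, 0 < f i.
Hypothesis eps_ge0 : 0 <= eps.
Hypothesis eps_lt_gamma : eps < gamma.
Hypothesis Wt_near : forall i j, i != j -> `|Wt i j / f i - W i j| <= eps.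
Hypothesis Gt_near : forall i j, frob (blk Gt i j - blk G i j) <= eta.
Hypothesis W_bound : forall i j, 0 <= W i j <= C.
Hypothesis G_bound : forall i j, frob (blk G i j) <= C.
Hypothesis Gt_bound : forall i j, frob (blk Gt i j) <= C.
Hypothesis rowdeg_gt : forall i, n%:R * gamma < rowdeg W i.

Let gamma_gt0 : 0 < gamma. Proof. exact: le_lt_trans eps_lt_gamma. Qed.
Let n_gt0R : 0 < n%:R :> R. Proof. by rewrite ltr0n. Qed.
Let C_ge0 : 0 <= C.
Proof.
by have /andP [w0 wC] := W_bound (Ordinal n_gt0) (Ordinal n_gt0); apply: le_trans wC.
Qed.
Let card_neq (i : 'I_n) : #|[pred j : 'I_n | j != i]|%:R <= n%:R :> R.
Proof. by rewrite ler_nat (leq_trans (max_card _)) ?card_ord. Qed.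

Lemma rowdeg_gt0 i : 0 < rowdeg W i.
Proof. by apply: lt_trans (rowdeg_gt i); rewrite mulr_gt0. Qed.

Lemma rowdeg_perturbed_gt0 i : 0 < rowdeg Wt i.
Proof.
have -> : rowdeg Wt i = f i * \sum_(j < n | j != i) Wt i j / f i.
  by rewrite mulr_sumr; apply: eq_bigr => j _; rewrite mulrCA mulfV ?gt_eqF ?mulr1.
rewrite mulr_gt0 //; apply: lt_le_trans (sum_perturbed_ge _); last first.
  by move=> j ji; apply: Wt_near; rewrite eq_sym.
have := rowdeg_gt i; have : eps * n%:R < gamma * n%:R by rewrite ltr_pM2r.
have := ler_wpM2l eps_ge0 (card_neq i); rewrite /rowdeg; lra.
Qed.

Lemma normalized_sqr_le i j : normalized W i j ^+ 2 <= (C / (n%:R * gamma)) ^+ 2.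
Proof.
have /andP [w0 wC] := W_bound i j; have D0 := rowdeg_gt0 i.
have nD0 : 0 < n%:R * gamma by rewrite mulr_gt0.
rewrite mxE ler_sqr ?nnegrE ?divr_ge0 // ?(ltW D0) ?(ltW nD0) //.
apply: le_trans (_ : C / rowdeg W i <= _); first by rewrite ler_wpM2r // invr_ge0 ltW.
by rewrite ler_wpM2l // lef_pV2 ?posrE // ltW.
Qed.

Lemma normalized_dist_row i :
  \sum_j (normalized (offdiag W) - normalized (offdiag Wt)) i j ^+ 2
    <= (eps / gamma + eps * C / (gamma * (gamma - eps))) ^+ 2 / n%:R.
Proof.
rewrite (bigID (fun j => j != i)) /= [X in _ + X]big1 ?addr0 => [|j]; last first.
  by rewrite negbK => /eqP ->; rewrite !mxE eqxx !mul0r subrr expr0n.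
under eq_bigr => j ji do rewrite !mxE eq_sym (negbTE ji) !rowdeg_offdiag.
apply: normalized_dist_le (f_gt0 i) eps_ge0 eps_lt_gamma _ _ n_gt0R (card_neq i) _.
- by move=> j ji; apply: Wt_near; rewrite eq_sym.
- by move=> j _; apply: W_bound.
- exact: rowdeg_gt.
Qed.

Lemma frob_L0mat_diff :
  frob (L0mat W G - L0mat Wt Gt)
    <= gamma^-1 * C * (eta + eps) + eps / (gamma * (gamma - eps)) * C ^+ 2.
Proof.
have deg0 i : rowdeg W i != 0 by rewrite gt_eqF ?rowdeg_gt0.
have degt0 i : rowdeg Wt i != 0 by rewrite gt_eqF ?rowdeg_perturbed_gt0.
have eta0 : 0 <= eta := le_trans (sqrtr_ge0 _) (Gt_near (Ordinal n_gt0) (Ordinal n_gt0)).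
rewrite !L0mat_Smat // SmatBB; apply: le_trans (frobD _ _) _.
have -> : gamma^-1 * C * (eta + eps) + eps / (gamma * (gamma - eps)) * C ^+ 2
   = C * eta / gamma + C * (eps / gamma + eps * C / (gamma * (gamma - eps))).
  by field; rewrite !gt_eqF ?subr_gt0.
apply: lerD; apply: frob_le.
- by rewrite divr_ge0 ?mulr_ge0 // ltW.
- have row i : \sum_j normalized (offdiag W) i j ^+ 2 <= n%:R * (C / (n%:R * gamma)) ^+ 2.
    rewrite -[n in n%:R * _]card_ord -sumr_const_pred ler_sum // => j _.
    by rewrite normalized_offdiag; case: eqP => _; rewrite ?normalized_sqr_le ?expr0n ?sqr_ge0.
  apply: le_trans (frob2_Smat_le eta0 _ row) _.
    by move=> i j; rewrite blkB -opprB frobN.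
  rewrite sumr_const_ord [X in X <= _](_ : _ = (C * eta / gamma) ^+ 2) //.
  by field; rewrite !gt_eqF.
- have gme : 0 < gamma - eps by rewrite subr_gt0.
  by rewrite mulr_ge0 // addr_ge0 // divr_ge0 ?mulr_ge0 ?(ltW gamma_gt0) ?(ltW gme).
- apply: le_trans (frob2_Smat_le C_ge0 Gt_bound normalized_dist_row) _.
  by rewrite sumr_const_ord [n%:R * _]mulrC divfK ?gt_eqF // exprMn.
Qed.

Lemma opbounded_Lmat_sub_L0mat :
  opbounded (Lmat W G - L0mat W G) (C ^+ 2 / (n%:R * gamma)).
Proof.
have deg0 i : rowdeg W i != 0 by rewrite gt_eqF ?rowdeg_gt0.
rewrite Lmat_Smat // L0mat_Smat // SmatBl; apply: opbounded_Smat_diag => [i j ij|i].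
  by rewrite !mxE (negbTE ij) !rowdeg_offdiag subrr.
rewrite !mxE eqxx mul0r subr0.
have -> : (C ^+ 2 / (n%:R * gamma)) ^+ 2 = (C / (n%:R * gamma)) ^+ 2 * C ^+ 2.
  by field; rewrite !gt_eqF.
apply: ler_pM; [exact: sqr_ge0 | exact: frob2_ge0 | | exact: frob2_le].
by have := normalized_sqr_le i i; rewrite mxE.
Qed.

End Perturbation.

Theorem lemma2p3 (R : realType) (n d : nat) (W Wt : 'M[R]_n)
    (G Gt : 'M[R]_(n * d)) (f : 'I_n -> R) (eps eta C gamma : R) :
  (0 < n)%N -> (0 < d)%N ->
  (forall i, 0 < f i) -> 0 <= eps -> 0 <= eta ->
  (forall i j, i != j -> `|Wt i j / f i - W i j| <= eps) ->
  (forall i j, frob (blk Gt i j - blk G i j) <= eta) ->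
  0 < C ->
  (forall i j, 0 <= W i j <= C) ->
  (forall i j, frob (blk G i j) <= C) ->
  (forall i j, frob (blk Gt i j) <= C) ->
  (forall i, gamma < n%:R^-1 * \sum_(j < n | j != i) W i j) ->
  eps < gamma ->
  opnorm (L0mat W G - L0mat Wt Gt)
    <= gamma^-1 * C * (eta + eps) + eps / (gamma * (gamma - eps)) * C ^+ 2
  /\
  opnorm (Lmat W G - L0mat Wt Gt)
    <= gamma^-1 * C * (eta + eps) + eps / (gamma * (gamma - eps)) * C ^+ 2
       + C ^+ 2 / (n%:R * gamma).
Proof.
move=> n0 _ f0 eps0 _ Wt_near Gt_near C0 W_bound G_bound Gt_bound avg_gt eps_lt.
have deg_gt i : n%:R * gamma < rowdeg W i by move: (avg_gt i); rewrite ltr_pdivlMl ?ltr0n.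
have g0 : 0 < gamma := le_lt_trans eps0 eps_lt.
have frob_diff := frob_L0mat_diff n0 f0 eps0 eps_lt Wt_near Gt_near W_bound Gt_bound deg_gt.
have diag := opbounded_Lmat_sub_L0mat n0 eps0 eps_lt W_bound G_bound deg_gt.
split; first exact: le_trans (opnorm_le (sqrtr_ge0 _) (opbounded_frob _)) frob_diff.
have -> : Lmat W G - L0mat Wt Gt = (L0mat W G - L0mat Wt Gt) + (Lmat W G - L0mat W G).
  by rewrite [RHS]addrC addrA subrK.
have KD0 : 0 <= C ^+ 2 / (n%:R * gamma) by rewrite divr_ge0 ?sqr_ge0 ?mulr_ge0 ?ler0n ?ltW.
apply: le_trans (opnorm_le _ (opboundedD (sqrtr_ge0 _) KD0 (opbounded_frob _) diag)) _.
  by rewrite addr_ge0 ?sqrtr_ge0.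
by rewrite lerD2r.
Qed.
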